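(* Let $\Pi$ be a finite projective plane and let $\mathcal{S}$ be a semioval in $\Pi$. Suppose that $\mathcal{T}\subset\mathcal{S}$ is a pointset with the property that for every line $\ell$ which is a secant line to $\mathcal{S}$ (i.e. $|\mathcal{S}\cap\ell|\geq 2$) the inequality $|\mathcal{S}\cap\ell|\geq|\mathcal{T}\cap\ell|+2$ holds. Then $\mathcal{S}\setminus\mathcal{T}$ is a semioval, and $\mathcal{S}$ contains semiovals of size $k$ for every integer $k$ satisfying $|\mathcal{S}\setminus\mathcal{T}|\leq k\leq|\mathcal{S}|$.
   Context: A semioval in a projective plane is a non-empty pointset $\mathcal{S}$ such that for every point $P\in\mathcal{S}$ there is a unique line $t_P$ with $\mathcal{S}\cap t_P=\{P\}$ (the tangent line at $P$). *)

From mathcomp Require Import all_boot.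
Set Implicit Arguments. Unset Strict Implicit. Unset Printing Implicit Defensive.

Definition on_line (Pt Ln : finType) (inc : Pt -> Ln -> bool)
  (A : {set Pt}) (l : Ln) : {set Pt} := [set p in A | inc p l].

Definition projective_plane (Pt Ln : finType) (inc : Pt -> Ln -> bool) : Prop :=
  (forall p q : Pt, p != q -> exists! l : Ln, inc p l && inc q l) /\
  (forall l m : Ln, l != m -> exists! p : Pt, inc p l && inc p m) /\
  (exists (a b c d : Pt), uniq [:: a; b; c; d] /\
     forall l : Ln, #|[set x in [:: a; b; c; d] | inc x l]| <= 2).

Definition semioval (Pt Ln : finType) (inc : Pt -> Ln -> bool) (S : {set Pt}) : Prop :=
  S != set0 /\
  forall p, p \in S -> exists! t : Ln, on_line inc S t = [set p].

From mathcomp Require Import all_boot.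

Set Implicit Arguments.
Unset Strict Implicit.
Unset Printing Implicit Defensive.

(* Let S' be any non-empty set with S \ T ⊆ S' ⊆ S. A point p of S' keeps its
   tangent line t of S, since S' ∩ t ⊆ S ∩ t = {p}. Conversely, if S' ∩ l = {p}
   then |S ∩ l| <= 1 + |T ∩ l|, which the hypothesis forbids for secant lines,
   so l is tangent to S at p and l = t. Hence S' is a semioval. It is non-empty
   when S' contains S \ T: a point p of S lies on a second line besides its
   tangent, necessarily a secant, and a secant contains fewer points of T than
   of S. *)

Lemma exists_card_between (X : finType) (A B : {set X}) k :
  A \subset B -> #|A| <= k <= #|B| ->
  exists2 C : {set X}, A \subset C & C \subset B /\ #|C| = k.
Proof.
move=> AB /andP[Ak kB].
have : 0 < #|[set D : {set X} | D \subset B :\: A & #|D| == k - #|A|]|.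
  by rewrite cards_draws bin_gt0 cardsDS // leq_sub2r.
case/card_gt0P=> D; rewrite inE => /andP[]; rewrite subsetD => /andP[DB dDA].
move=> /eqP cD; exists (A :|: D); first exact: subsetUl.
split; first by rewrite subUset AB.
have /eqP AD0 : A :&: D == set0 by rewrite setI_eq0 disjoint_sym.
by rewrite cardsU AD0 cards0 subn0 cD subnKC.
Qed.

Section Semiovals.
Variables (Pt Ln : finType) (inc : Pt -> Ln -> bool).

Lemma on_lineS (A B : {set Pt}) l :
  A \subset B -> on_line inc A l \subset on_line inc B l.
Proof. by move=> AB; apply/subsetP=> x; rewrite !inE => /andP[/(subsetP AB) -> ->]. Qed.

Lemma on_line_eq1 (A : {set Pt}) p l :
  p \in A -> inc p l -> #|on_line inc A l| <= 1 -> on_line inc A l = [set p].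
Proof. by move=> pA pl le1; apply/eqP; rewrite eq_sym eqEcard sub1set inE pA pl cards1. Qed.

Lemma tangent_subset (A B : {set Pt}) p t :
  A \subset B -> p \in A -> on_line inc B t = [set p] -> on_line inc A t = [set p].
Proof.
move=> AB pA Bt; have : p \in on_line inc B t by rewrite Bt set11.
rewrite inE => /andP[_ pt]; apply: on_line_eq1 => //.
by rewrite -(cards1 p) -Bt subset_leq_card // on_lineS.
Qed.

Lemma exists_other_line_through (p : Pt) (t : Ln) :
  projective_plane inc -> exists2 l, inc p l & l != t.
Proof.
move=> [join [_ [a [b [c [d [quad_uniq quad_on_line]]]]]]].
set quad := [:: a; b; c; d].
have /subsetPn [w quad_w] : ~~ ([set x in quad] \subset p |: [set x in quad | inc x t]).
  apply/negP=> /subset_leq_card; rewrite cardsE (card_uniqP quad_uniq) cardsU1.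
  by move/leq_trans/(_ (leq_add (leq_b1 _) (quad_on_line t))).
rewrite in_set in quad_w; rewrite in_setU1 in_set quad_w negb_or => /andP[wp wt].
have pw : p != w by rewrite eq_sym.
have [l [/andP[pl wl] _]] := join p w pw.
by exists l => //; apply: contraNneq wt => <-.
Qed.

Lemma semioval_secant_through (S : {set Pt}) p :
  projective_plane inc -> semioval inc S -> p \in S ->
  exists2 l, inc p l & 2 <= #|on_line inc S l|.
Proof.
move=> plane [_ tangent] pS; have [t [St t_uniq]] := tangent p pS.
have [l pl lt] := exists_other_line_through p t plane.
exists l => //; rewrite ltnNge; apply: contra lt => le1.
by rewrite -(t_uniq l (on_line_eq1 pS pl le1)).
Qed.

Variables (S T : {set Pt}).
Hypothesis S_semioval : semioval inc S.
Hypothesis T_thin : forall l : Ln, 2 <= #|on_line inc S l| ->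
  #|on_line inc T l| + 2 <= #|on_line inc S l|.

Lemma semioval_setD_neq0 : projective_plane inc -> S :\: T != set0.
Proof.
move=> plane; have [/set0Pn [p pS] _] := S_semioval.
have [l _ secant] := semioval_secant_through plane S_semioval pS.
apply: contraTneq (T_thin secant) => /eqP; rewrite setD_eq0 -ltnNge => ST.
by rewrite addn2 ltnS (leq_trans (subset_leq_card (on_lineS l ST)) (leqnSn _)).
Qed.

Lemma tangent_from_between (S' : {set Pt}) p l :
  S :\: T \subset S' -> S' \subset S -> on_line inc S' l = [set p] ->
  on_line inc S l = [set p].
Proof.
move=> DS' S'S S'l; have : p \in on_line inc S' l by rewrite S'l set11.
rewrite inE => /andP[pS' pl]; apply: on_line_eq1 (subsetP S'S p pS') pl _.
have cover : on_line inc S l \subset on_line inc S' l :|: on_line inc T l.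
  apply/subsetP=> x; rewrite !inE => /andP[xS ->]; rewrite !andbT.
  by case: (boolP (x \in T)) => xT; rewrite ?orbT // (subsetP DS') // inE xT.
have le := leq_trans (subset_leq_card cover) (leq_card_setU _ _).
rewrite S'l cards1 in le; rewrite leqNgt; apply/negP => secant.
by have := leq_trans (T_thin secant) le; rewrite addn2 add1n ltnn.
Qed.

Lemma semioval_between (S' : {set Pt}) :
  S :\: T \subset S' -> S' \subset S -> S' != set0 -> semioval inc S'.
Proof.
move=> DS' S'S S'_neq0; split=> // p pS'.
have [_ tangent] := S_semioval; have [t [St t_uniq]] := tangent p (subsetP S'S p pS').
exists t; split; first exact: tangent_subset S'S pS' St.
by move=> l S'l; apply: t_uniq; apply: tangent_from_between S'l.
Qed.

End Semiovals.

Theorem mainTheorem1 (Pt Ln : finType) (inc : Pt -> Ln -> bool)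
  (Hpp : projective_plane inc) (S T : {set Pt}) :
  semioval inc S -> T \subset S ->
  (forall l : Ln, 2 <= #|on_line inc S l| ->
     #|on_line inc T l| + 2 <= #|on_line inc S l|) ->
  semioval inc (S :\: T) /\
  (forall k : nat, #|S :\: T| <= k <= #|S| ->
     exists S' : {set Pt}, [/\ S' \subset S, #|S'| = k & semioval inc S']).
Proof.
(* Only S \ T enters the argument. *)
move=> S_semioval _ T_thin.
have D_neq0 := semioval_setD_neq0 S_semioval T_thin Hpp.
have between := semioval_between S_semioval T_thin.
split; first exact: between (subxx _) (subsetDl S T) D_neq0.
move=> k /(exists_card_between (subsetDl S T)) [S' DS' [S'S cardS']].
have S'_neq0 : S' != set0.
  by apply: contraNneq D_neq0 => S'0; rewrite -subset0 -S'0.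
by exists S'; split=> //; apply: between DS' S'S S'_neq0.
Qed.
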